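(* Let $G$ be a directed graph, let $a, b, k \geq 1$ be integers, and let $D$ be a well-linked set in $G$ of size $4(a+k)b$. If $G$ does not contain a family of $k$ directed cycles such that every vertex of $G$ is in at most two of the cycles, then there exist walks $P_1,\ldots,P_a$ in $G$ and sets $A_i, B_i \subseteq V(P_i)$ for $1 \leq i \leq a$ such that: (1) the family $\{P_1,\ldots,P_a\}$ is of congestion $2$; (2) the sets $A_1,B_1,\ldots,A_a,B_a$ each have size $b$ and are pairwise disjoint; (3) for every $1 \leq i \leq a$, all vertices of $A_i$ appear on $P_i$ before all vertices of $B_i$; (4) $\bigcup_{i=1}^a (A_i \cup B_i)$ is well-linked in $G$.
   Context: For $A,B\subseteq V(G)$ with $|A|=|B|$, a linkage from $A$ to $B$ is a set of $|A|$ pairwise vertex-disjoint directed paths each starting in $A$ and ending in $B$. A set $W\subseteq V(G)$ is well-linked if for all $A,B\subseteq W$ with $|A|=|B|$ there is a linkage from $A$ to $B$ in $G-(W\setminus(A\cup B))$. A family of walks is of congestion $c$ if every vertex is visited at most $c$ times in total by the walks (each visit counted separately). *)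

From mathcomp Require Import all_boot.
Set Implicit Arguments. Unset Strict Implicit. Unset Printing Implicit Defensive.

Section Digraph.
Variables (V : finType) (E : rel V).

Definition is_walk (p : seq V) : bool :=
  if p is x :: q then path E x q else false.

Definition is_dpath (p : seq V) : bool := is_walk p && uniq p.

Definition is_dcycle (c : seq V) : bool := [&& c != [::], uniq c & cycle E c].

(* Arc set of a cycle, used to identify cycles up to rotation. *)
Definition cycle_arcs (c : seq V) : {set V * V} :=
  [set e | (e.1 \in c) && (e.2 == next c e.1)].

Definition half_integral_cycle_packing (k : nat) (F : seq (seq V)) : Prop :=
  [/\ size F = k, all is_dcycle F, uniq (map cycle_arcs F)
    & forall v : V, count (fun c => v \in c) F <= 2].

Definition starts_ends_in (A B : {set V}) (p : seq V) : bool :=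
  if p is x :: q then (x \in A) && (last x q \in B) else false.

Definition linkage_in (X A B : {set V}) : Prop :=
  exists L : seq (seq V),
    [/\ size L = #|A|,
        forall p, p \in L ->
          [/\ is_dpath p, all (fun v => v \in X) p & starts_ends_in A B p] &
        forall i j, i < j < size L ->
          [disjoint (nth [::] L i) & (nth [::] L j)]].

Definition well_linked (W : {set V}) : Prop :=
  forall A B : {set V}, A \subset W -> B \subset W -> #|A| = #|B| ->
    linkage_in (~: (W :\: (A :|: B))) A B.

Definition congestion_le (c : nat) (P : seq (seq V)) : Prop :=
  forall v : V, \sum_(p <- P) count_mem v p <= c.

Definition before_on (p : seq V) (A B : {set V}) : Prop :=
  exists j, {subset A <= take j p} /\ {subset B <= drop j p}.
End Digraph.

From mathcomp Require Import all_boot zify.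
Set Implicit Arguments. Unset Strict Implicit. Unset Printing Implicit Defensive.

(* Split D into halves X and Y and take linkages L1 from X to Y and L2 from Y
   to X. Following the L1-path from x in X and then the L2-path from its end
   defines a permutation of X; walks obtained by iterating it from pairwise
   disjoint stretches of X have congestion 2, because every vertex lies on at
   most one path of each linkage. Each orbit of the permutation closes into a
   directed cycle, and distinct orbits give a half-integral packing. So there
   are fewer than k orbits, and cutting them into segments of 2b consecutive
   points leaves at least a segments. The first b points of a segment form A_i
   and the next b form B_i; all of them lie in D, hence are well-linked. *)

Section SeqFacts.
Variable T : eqType.
Implicit Types s : seq T.

Lemma count_mem_behead (x : T) s : count_mem x (behead s) <= count_mem x s.
Proof. by case: s => //= y s; rewrite leq_addl. Qed.

Lemma count_le_sum (P : pred T) (F : T -> nat) s :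
  (forall x, x \in s -> P x -> 0 < F x) -> count P s <= \sum_(x <- s) F x.
Proof.
elim: s => [|x s IHs] PF; first by rewrite big_nil.
rewrite /= big_cons leq_add ?IHs //; last by move=> y ys; apply: PF; rewrite inE ys orbT.
by case: (boolP (P x)) => // Px; apply: PF; rewrite ?mem_head.
Qed.

Lemma leq_add_sum_seq (F : T -> nat) s x y : uniq s -> x \in s -> y \in s -> x != y ->
  F x + F y <= \sum_(i <- s) F i.
Proof.
by move=> us xs ys xy; rewrite (bigD1_seq x) //= (big_rem y) //= eq_sym xy leq_add2l leq_addr.
Qed.

Lemma uniq_flatten_map_mem (S : eqType) (G : S -> seq T) r x :
  uniq (flatten (map G r)) -> x \in r -> uniq (G x).
Proof.
elim: r => //= y r IHr; rewrite cat_uniq inE => /and3P[uGy _ uGr] /predU1P[->//|].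
exact: IHr.
Qed.

Lemma uniq_flatten_map_take (S : Type) (G : S -> seq T) n (r : seq S) :
  uniq (flatten (map G r)) -> uniq (flatten (map G (take n r))).
Proof.
by rewrite -{1}(cat_take_drop n r) map_cat flatten_cat cat_uniq => /andP[].
Qed.

Lemma flatten_map_take_subset (S : Type) (G : S -> seq T) n (r : seq S) :
  {subset flatten (map G (take n r)) <= flatten (map G r)}.
Proof.
by move=> x; rewrite -{2}(cat_take_drop n r) map_cat flatten_cat mem_cat => ->.
Qed.

Lemma uniq_of_uniq_flatten (G : T -> seq T) s :
  uniq (flatten (map G s)) -> (forall x, x \in s -> x \in G x) -> uniq s.
Proof.
elim: s => //= x s IHs; rewrite cat_uniq => /and3P[_ notGs us] xG.
rewrite IHs // => [|y ys]; last by apply: xG; rewrite inE ys orbT.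
rewrite andbT; apply: contra notGs => xs; apply/hasP; exists x.
  by apply/flattenP; exists (G x); rewrite ?map_f ?xG // inE xs orbT.
by rewrite xG ?mem_head.
Qed.

End SeqFacts.

Section FinSeqFacts.
Variable T : finType.
Implicit Types s : seq T.

Lemma uniq_cat_disjoint s1 s2 : uniq (s1 ++ s2) -> [disjoint s1 & s2].
Proof.
rewrite cat_uniq disjoint_sym disjoint_has => /and3P[_ + _].
by apply: contra => /hasP[x x2 x1]; apply/hasP; exists x.
Qed.

Lemma uniq_flatten_map_disjoint (S : eqType) (G : S -> seq T) r x y :
  uniq (flatten (map G r)) -> x \in r -> y \in r -> x != y -> [disjoint G x & G y].
Proof.
have sub_flatten z r' : z \in r' -> G z \subset flatten (map G r').
  by move=> zr; apply/subsetP => u uGz; apply/flattenP; exists (G z); rewrite ?map_f.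
elim: r => //= w r IHr uGr; move: (uniq_cat_disjoint uGr); rewrite cat_uniq in uGr.
case/and3P: uGr => _ _ uGr disj_w; rewrite !inE.
case/predU1P=> [->|xr] /predU1P[->|yr]; rewrite ?eqxx // => xy.
- exact: disjointWr (sub_flatten _ _ yr) disj_w.
- by rewrite disjoint_sym; apply: disjointWr (sub_flatten _ _ xr) disj_w.
- exact: IHr.
Qed.

Lemma traject_halvesU (h : T -> T) z n :
  [set y in traject h z n] :|: [set y in traject h (iter n h z) n] =
  [set y in traject h z (n + n)].
Proof. by apply/setP => y; rewrite !inE trajectD mem_cat. Qed.

Lemma traject_halves (h : T -> T) z n : uniq (traject h z (n + n)) ->
  [/\ #|[set y in traject h z n]| = n, #|[set y in traject h (iter n h z) n]| = n
    & [disjoint [set y in traject h z n] & [set y in traject h (iter n h z) n]]].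
Proof.
rewrite trajectD => uz; have disj := uniq_cat_disjoint uz.
move: uz; rewrite cat_uniq => /and3P[u1 _ u2].
rewrite !cardsE (card_uniqP u1) (card_uniqP u2) !size_traject; split=> //.
by apply: disjointW disj; apply/subsetP => y; rewrite inE.
Qed.

End FinSeqFacts.

Lemma split_set (T : finType) (D : {set T}) m n : #|D| = m + n ->
  exists X Y : {set T},
    [/\ X \subset D, Y \subset D, [disjoint X & Y], #|X| = m & #|Y| = n].
Proof.
move=> cardD; have uD := enum_uniq (mem D).
have sizeD : size (enum D) = m + n by rewrite -cardE.
exists [set x in take m (enum D)], [set x in drop m (enum D)]; split.
- by apply/subsetP => x; rewrite inE => /mem_take; rewrite mem_enum.
- by apply/subsetP => x; rewrite inE => /mem_drop; rewrite mem_enum.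
- move: uD; rewrite -{1}(cat_take_drop m (enum D)) => /uniq_cat_disjoint.
  by apply: disjointW; apply/subsetP => x; rewrite inE.
- by rewrite cardsE (card_uniqP (take_uniq _ uD)) size_takel // sizeD leq_addr.
- by rewrite cardsE (card_uniqP (drop_uniq _ uD)) size_drop sizeD addKn.
Qed.

Section OrbitDecomposition.
Variables (T : finType) (h : T -> T).
Hypothesis h_inj : injective h.

Lemma flatten_traject_segments m y q s :
  flatten [seq traject h z m | z <- [seq iter (m * t) h y | t <- iota s q]] =
  traject h (iter (m * s) h y) (m * q).
Proof.
elim: q s => [|q IHq] s; first by rewrite muln0.
by rewrite /= IHq (mulnS m q) trajectD (mulnS m s) iterD.
Qed.

Lemma orbit_subset (S : {set T}) x : {homo h : y / y \in S} -> x \in S ->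
  {subset orbit h x <= S}.
Proof.
move=> hS xS _ /trajectP[i _ ->]; elim: i => [//|i IHi].
by rewrite iterS hS.
Qed.

Lemma orbit_segment_decomposition m (S : {set T}) : 0 < m -> {homo h : x / x \in S} ->
  exists R Z : seq T,
  [/\ uniq (flatten [seq orbit h r | r <- R]),
      uniq (flatten [seq traject h z m | z <- Z]),
      {subset flatten [seq orbit h r | r <- R] <= S},
      {subset flatten [seq traject h z m | z <- Z] <= S}
    & #|S| <= m * (size R + size Z)].
Proof.
(* An orbit O contributes one root to R and |O| %/ m segments to Z,
   and |O| < m * (1 + |O| %/ m). *)
move=> m_gt0; elim: {S}_.+1 {-2}S (ltnSn #|S|) => // n IHn S cardS hS.
have [->|[x xS]] := set_0Vmem S; first by exists [::], [::]; rewrite cards0.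
pose O := [set y in orbit h x].
have OS : O \subset S by apply/subsetP => y; rewrite inE; apply: orbit_subset.
have xO : x \in O by rewrite inE in_orbit.
have notO y : y \in S :\: O -> y \notin orbit h x by rewrite !inE => /andP[].
have hSO : {homo h : y / y \in S :\: O}.
  move=> y yS'; rewrite !inE hS ?andbT; last by case/setDP: yS'.
  apply: contra (notO y yS'); rewrite -!fconnect_orbit => xhy.
  by apply: connect_trans xhy _; rewrite fconnect_sym // fconnect1.
have [|R [Z [uR uZ RS ZS cover]]] := IHn (S :\: O) _ hSO.
  rewrite -ltnS; apply: leq_trans cardS; rewrite ltnS; apply: proper_card; apply/properP.
  by split; [apply: subsetDl | exists x; rewrite // inE xO].
pose q := order h x %/ m.
have seg_orbit : {subset traject h x (m * q) <= orbit h x}.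
  by move=> y /trajectP[i _ ->]; rewrite -fconnect_orbit fconnect_iter.
have seg_uniq : uniq (traject h x (m * q)).
  have seg_le : m * q <= order h x by rewrite mulnC leq_divM.
  by rewrite -(take_traject _ _ seg_le) take_uniq ?orbit_uniq.
exists (x :: R), ([seq iter (m * t) h x | t <- iota 0 q] ++ Z).
rewrite /= map_cat flatten_cat flatten_traject_segments muln0 /=.
rewrite !cat_uniq orbit_uniq uR uZ seg_uniq.
split=> //; rewrite ?andbT /=.
- by apply/hasPn => y /RS /notO.
- by apply/hasPn => y /ZS /notO; apply: contra; apply: seg_orbit.
- move=> y; rewrite mem_cat => /orP[yO|/RS]; last by case/setDP.
  exact: orbit_subset yO.
- move=> y; rewrite mem_cat => /orP[/seg_orbit yO|/ZS]; last by case/setDP.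
  exact: orbit_subset yO.
- rewrite -(cardsID O S) (setIidPr OS) cardsE (card_uniqP (orbit_uniq _ _)) size_orbit.
  rewrite size_cat size_map size_iota; have := ltn_ceil (order h x) m_gt0.
  rewrite -/q; nia.
Qed.

End OrbitDecomposition.

Section Digraph.
Variables (V : finType) (E : rel V).

Definition is_linkage (S T : {set V}) (L : seq (seq V)) : Prop :=
  [/\ size L = #|S|,
      forall p, p \in L -> is_dpath E p /\ starts_ends_in S T p &
      forall i j, i < j < size L -> [disjoint nth [::] L i & nth [::] L j]].

Lemma well_linked_linkage (W S T : {set V}) : well_linked E W ->
  S \subset W -> T \subset W -> #|S| = #|T| -> exists L, is_linkage S T L.
Proof.
move=> wlW SW TW cST; have [L [sizeL pathL disjL]] := wlW S T SW TW cST.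
by exists L; split=> // p /pathL[].
Qed.

Lemma well_linked_subset (W W' : {set V}) :
  W' \subset W -> well_linked E W -> well_linked E W'.
Proof.
move=> W'W wlW S T SW' TW' cST.
have [L [sizeL pathL disjL]] := wlW S T (subset_trans SW' W'W) (subset_trans TW' W'W) cST.
exists L; split=> // p /pathL[dp inX ST]; split=> //.
apply/allP => v /(allP inX); rewrite !inE; apply: contra => /andP[-> /=].
exact: (subsetP W'W).
Qed.

Lemma before_on_subset (p : seq V) (A B : {set V}) :
  before_on p A B -> {subset A <= p} /\ {subset B <= p}.
Proof.
by case=> j [sA sB]; split=> x; [move/sA; apply: mem_take | move/sB; apply: mem_drop].
Qed.

(* [behead (belast r s)] is [s] without its final return to [r]. *)
Definition closed_walk_cycle (r : V) (s : seq V) := r :: shorten r (behead (belast r s)).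

Lemma closed_walk_cycleP r s : path E r s -> last r s = r -> s != [::] ->
  is_dcycle E (closed_walk_cycle r s) /\ {subset closed_walk_cycle r s <= r :: s}.
Proof.
case/lastP: s => [//|u x]; rewrite last_rcons => + xr _; rewrite {}xr.
rewrite /closed_walk_cycle belast_rcons /= rcons_path => /andP[pu ur].
case: (shortenP pu) ur => p pp up subp ur.
split; first by rewrite /is_dcycle up /= rcons_path pp ur.
by move=> y; rewrite !inE mem_rcons inE => /orP[->|/subp ->]; rewrite ?orbT.
Qed.

Lemma half_integral_cycle_packing_take n k F :
  half_integral_cycle_packing E n F -> k <= n -> half_integral_cycle_packing E k (take k F).
Proof.
case=> sizeF cycF uniqF countF kn; split.
- by rewrite size_takel // sizeF.
- by apply/allP => c /mem_take; apply: (allP cycF).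
- by rewrite map_take take_uniq.
- by move=> v; apply: leq_trans (countF v); rewrite -{2}(cat_take_drop k F) count_cat leq_addr.
Qed.

Section Linkage.
Variables (S T : {set V}) (L : seq (seq V)).
Hypothesis linkL : is_linkage S T L.

Definition linkage_path x := nth [::] L (find (fun p => ohead p == Some x) L).
Definition linkage_end x := last x (linkage_path x).

Let sizeL : size L = #|S|. Proof. by case: linkL. Qed.
Let pathL p : p \in L -> is_dpath E p /\ starts_ends_in S T p.
Proof. by case: linkL => _ + _; apply. Qed.

Lemma linkage_nth_disjoint i j : i < size L -> j < size L -> i != j ->
  [disjoint nth [::] L i & nth [::] L j].
Proof.
case: linkL => _ _ disjL iL jL; rewrite neq_ltn => /orP[ij|ji].
  by apply: disjL; rewrite ij.
by rewrite disjoint_sym; apply: disjL; rewrite ji.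
Qed.

Lemma linkage_mem_cons p : p \in L -> exists2 x, x \in S & p = x :: behead p.
Proof. by case/pathL=> _; case: p => //= x p /andP[xS _]; exists x. Qed.

Lemma linkage_heads_uniq x0 : uniq [seq head x0 p | p <- L].
Proof.
apply/(uniqP x0) => i j; rewrite !inE size_map => iL jL.
rewrite !(nth_map [::]) //; apply: contra_eq => ij.
move: (linkage_nth_disjoint iL jL ij).
have [y _ ->] := linkage_mem_cons (mem_nth [::] iL).
have [z _ ->] := linkage_mem_cons (mem_nth [::] jL).
by apply: contraTneq => /= ->; apply/pred0Pn; exists z; rewrite /= !inE eqxx.
Qed.

Lemma linkage_has_start x : x \in S -> has (fun p => ohead p == Some x) L.
Proof.
move=> xS; have heads_sub : {subset [seq head x p | p <- L] <= S}.
  by move=> y /mapP[p /linkage_mem_cons[z zS ->] ->].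
have heads_card : #|[seq head x p | p <- L]| = #|S|.
  by rewrite (card_uniqP (linkage_heads_uniq x)) size_map sizeL.
move: xS; rewrite -(subset_cardP heads_card (introT subsetP heads_sub)).
case/mapP=> p pL xp; apply/hasP; exists p => //.
by have [y _ py] := linkage_mem_cons pL; rewrite py /= xp py.
Qed.

Lemma linkage_path_mem x : x \in S -> linkage_path x \in L.
Proof. by move/linkage_has_start; rewrite has_find; apply: mem_nth. Qed.

Lemma linkage_pathE x : x \in S -> linkage_path x = x :: behead (linkage_path x).
Proof.
move/linkage_has_start/(nth_find [::]); rewrite -/(linkage_path x).
by case: (linkage_path x) => //= y p /eqP[->].
Qed.

Lemma linkage_path_dpath x : x \in S -> is_dpath E (linkage_path x).
Proof. by move/linkage_path_mem/pathL=> []. Qed.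

Lemma linkage_end_in x : x \in S -> linkage_end x \in T.
Proof.
move=> xS; have [_] := pathL (linkage_path_mem xS).
by rewrite /linkage_end (linkage_pathE xS) /= => /andP[].
Qed.

Lemma linkage_end_mem x : x \in S -> linkage_end x \in linkage_path x.
Proof. by move=> xS; rewrite /linkage_end (linkage_pathE xS) /= mem_last. Qed.

Lemma linkage_path_disjoint x y : x \in S -> y \in S -> x != y ->
  [disjoint linkage_path x & linkage_path y].
Proof.
move=> xS yS xy; apply: linkage_nth_disjoint; rewrite -?has_find ?linkage_has_start //.
apply: contra xy => /eqP ij; move: (linkage_pathE xS) (linkage_pathE yS).
by rewrite /linkage_path ij => -> [->].
Qed.

Lemma linkage_end_inj : {in S &, injective linkage_end}.
Proof.
move=> x y xS yS exy; apply/eqP; apply: contraT => xy.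
have := disjointFr (linkage_path_disjoint xS yS xy) (linkage_end_mem xS).
by rewrite exy linkage_end_mem.
Qed.

Lemma linkage_path_count v (Z : seq V) : uniq Z -> {subset Z <= S} ->
  \sum_(z <- Z) count_mem v (linkage_path z) <= 1.
Proof.
elim: Z => [|z Z IHZ]; first by rewrite big_nil.
rewrite /= big_cons => /andP[zZ uZ] ZS.
have zS : z \in S by rewrite ZS ?mem_head.
have {}ZS : {subset Z <= S} by move=> y yZ; rewrite ZS // inE yZ orbT.
have [vz|vz] := boolP (v \in linkage_path z); last by rewrite (count_memPn vz) IHZ.
have [_ /count_uniq_mem ->] := andP (linkage_path_dpath zS).
rewrite vz big1_seq // => y /andP[_ yZ]; apply/count_memPn.
have zy : z != y by apply: contraNneq zZ => ->.
by rewrite (disjointFr (linkage_path_disjoint zS (ZS y yZ) zy) vz).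
Qed.

End Linkage.

Section Rounds.
Variables (X Y : {set V}) (L1 L2 : seq (seq V)).
Hypotheses (link1 : is_linkage X Y L1) (link2 : is_linkage Y X L2).
Hypothesis disjXY : [disjoint X & Y].

Local Notation path1 := (linkage_path L1).
Local Notation end1 := (linkage_end L1).
Local Notation path2 := (linkage_path L2).
Local Notation end2 := (linkage_end L2).

(* The identity outside X keeps [round] injective on all of V. *)
Definition round v := if v \in X then end2 (end1 v) else v.
Definition round_step u := behead (path1 u) ++ behead (path2 (end1 u)).
Definition round_steps n w := flatten [seq round_step u | u <- traject round w n].
Definition round_walk n w := w :: round_steps n w.

Lemma round_in w : w \in X -> round w \in X.
Proof. by move=> wX; rewrite /round wX !(linkage_end_in link2, linkage_end_in link1). Qed.

Lemma iter_round_in i w : w \in X -> iter i round w \in X.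
Proof. by move=> wX; elim: i => // i IHi; rewrite iterS round_in. Qed.

Lemma round_inj : injective round.
Proof.
move=> u v; rewrite /round.
have [end1_inj end2_inj] := (linkage_end_inj link1, linkage_end_inj link2).
have end21_in w : w \in X -> end2 (end1 w) \in X.
  by move=> wX; rewrite !(linkage_end_in link2, linkage_end_in link1).
case: ifP => uX; case: ifP => vX.
- by move/end2_inj => /(_ (linkage_end_in link1 uX) (linkage_end_in link1 vX))/end1_inj; apply.
- by move=> uv; move: vX; rewrite -uv end21_in.
- by move=> uv; move: uX; rewrite uv end21_in.
- by [].
Qed.

Lemma last_behead_path1 w : w \in X -> last w (behead (path1 w)) = end1 w.
Proof. by move=> wX; rewrite /linkage_end {2}(linkage_pathE link1 wX). Qed.

Lemma last_behead_path2 w : w \in Y -> last w (behead (path2 w)) = end2 w.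
Proof. by move=> wY; rewrite /linkage_end {2}(linkage_pathE link2 wY). Qed.

Lemma path_round_step w : w \in X -> path E w (round_step w).
Proof.
move=> wX; have end1Y := linkage_end_in link1 wX.
have /andP[+ _] := linkage_path_dpath link1 wX.
have /andP[+ _] := linkage_path_dpath link2 end1Y.
rewrite (linkage_pathE link1 wX) (linkage_pathE link2 end1Y) /= => p2 p1.
by rewrite cat_path last_behead_path1 // p1 p2.
Qed.

Lemma last_round_step w : w \in X -> last w (round_step w) = round w.
Proof.
move=> wX; rewrite last_cat last_behead_path1 // last_behead_path2 ?(linkage_end_in link1) //.
by rewrite /round wX.
Qed.

Lemma round_mem_step w : w \in X -> round w \in round_step w.
Proof.
move=> wX; rewrite -(last_round_step wX) /round_step.
case e1: (behead (path1 w)) => [|x s]; last by rewrite /= mem_last.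
have := last_behead_path1 wX; rewrite e1 /= => wend.
by move: (disjointFr disjXY wX); rewrite wend (linkage_end_in link1).
Qed.

Lemma path_round_steps n w : w \in X -> path E w (round_steps n w).
Proof.
elim: n w => // n IHn w wX; rewrite /round_steps /= cat_path path_round_step //.
by rewrite last_round_step // IHn ?round_in.
Qed.

Lemma last_round_steps n w : w \in X -> last w (round_steps n w) = iter n round w.
Proof.
elim: n w => // n IHn w wX; rewrite /round_steps /= last_cat last_round_step //.
by rewrite IHn ?round_in // -iterSr.
Qed.

Lemma iter_round_mem_steps n i w : w \in X -> i < n ->
  iter i.+1 round w \in round_steps n w.
Proof.
elim: n i w => // n IHn [|i] w wX lt_in; rewrite /round_steps /= mem_cat.
  by rewrite round_mem_step.
by rewrite -!iterS iterSr IHn ?orbT ?round_in.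
Qed.

Lemma round_stepsD n1 n2 w :
  round_steps (n1 + n2) w = round_steps n1 w ++ round_steps n2 (iter n1 round w).
Proof. by rewrite /round_steps trajectD map_cat flatten_cat. Qed.

Lemma count_round_steps v n w :
  count_mem v (round_steps n w) <=
  \sum_(u <- traject round w n) (count_mem v (path1 u) + count_mem v (path2 (end1 u))).
Proof.
elim: n w => [|n IHn] w; first by rewrite big_nil.
by rewrite /round_steps /= big_cons !count_cat leq_add ?IHn ?leq_add ?count_mem_behead.
Qed.

Lemma count_round_walk v n w : w \in X ->
  count_mem v (round_walk n.+1 w) <=
  \sum_(u <- traject round w n.+1) (count_mem v (path1 u) + count_mem v (path2 (end1 u))).
Proof.
move=> wX; rewrite big_cons.
rewrite -[round_walk _ _]/(((w :: behead (path1 w)) ++ behead (path2 (end1 w)))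
  ++ round_steps n (round w)).
rewrite -(linkage_pathE link1 wX) !count_cat leq_add ?count_round_steps //.
by rewrite leq_add2l count_mem_behead.
Qed.

Lemma round_walks_congestion v (Zs : seq V) (len : V -> nat) :
  (forall z, z \in Zs -> 0 < len z) ->
  uniq (flatten [seq traject round z (len z) | z <- Zs]) ->
  {subset flatten [seq traject round z (len z) | z <- Zs] <= X} ->
  \sum_(z <- Zs) count_mem v (round_walk (len z) z) <= 2.
Proof.
set Us := flatten _ => len_gt0 uUs UsX.
apply: (@leq_trans (\sum_(u <- Us)
    (count_mem v (path1 u) + count_mem v (path2 (end1 u))))); last first.
  have uUs2 : uniq (map end1 Us).
    by rewrite map_inj_in_uniq // => x y /UsX xX /UsX yX; apply: (linkage_end_inj link1 xX yX).
  have Us2Y : {subset map end1 Us <= Y}.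
    by move=> y /mapP[x /UsX xX ->]; apply: (linkage_end_in link1 xX).
  rewrite big_split -(big_map end1 predT (fun y => count_mem v (path2 y))) /=.
  exact: leq_add (linkage_path_count link1 v uUs UsX) (linkage_path_count link2 v uUs2 Us2Y).
rewrite big_flatten big_map big_seq [leqRHS]big_seq; apply: leq_sum => z zZs.
have := len_gt0 z zZs; case lenz: (len z) => [//|n] _.
apply: count_round_walk; apply: UsX; apply/flattenP; exists (traject round z (len z)).
  exact: map_f.
by rewrite lenz mem_head.
Qed.

Lemma round_walk_halves n z : z \in X ->
  before_on (round_walk (n + n) z)
    [set y in traject round z n] [set y in traject round (iter n round z) n].
Proof.
case: n => [|n] zX; first by exists 0; split=> y; rewrite inE.
exists (size (round_walk n z)).
rewrite addSnnS /round_walk round_stepsD -cat_cons take_size_cat ?drop_size_cat //.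
split=> y; rewrite inE => /trajectP[i lt_in ->].
  case: i lt_in => [|i] lt_in; first exact: mem_head.
  by rewrite inE iter_round_mem_steps ?orbT.
rewrite -iterD addnS -addSn iterD iter_round_mem_steps ?iter_round_in //.
exact: ltnW.
Qed.

Definition orbit_cycle r := closed_walk_cycle r (round_steps (order round r) r).

Lemma orbit_cycleP r : r \in X ->
  is_dcycle E (orbit_cycle r) /\ {subset orbit_cycle r <= round_walk (order round r) r}.
Proof.
move=> rX; apply: closed_walk_cycleP; first exact: path_round_steps.
  by rewrite last_round_steps // (iter_order round_inj).
apply/eqP=> steps0; have := iter_round_mem_steps (i := 0) rX (order_gt0 round r).
by rewrite steps0.
Qed.

Lemma orbit_cycle_packing (R : seq V) :
  uniq (flatten [seq orbit round r | r <- R]) ->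
  {subset flatten [seq orbit round r | r <- R] <= X} ->
  half_integral_cycle_packing E (size R) [seq orbit_cycle r | r <- R].
Proof.
move=> uniqO OX.
have RX r : r \in R -> r \in X.
  by move=> rR; apply: OX; apply/flattenP; exists (orbit round r); rewrite ?map_f ?in_orbit.
have uniqR : uniq R by apply: (uniq_of_uniq_flatten uniqO) => r _; apply: in_orbit.
pose walk r := round_walk (order round r) r.
have congestion v : \sum_(r <- R) count_mem v (walk r) <= 2.
  by apply: round_walks_congestion => // r _; apply: order_gt0.
have in_walk v r : r \in R -> v \in orbit_cycle r -> 0 < count_mem v (walk r).
  by move=> rR /(orbit_cycleP (RX r rR)).2; rewrite -has_count has_pred1.
split.
- by rewrite size_map.
- by apply/allP => c /mapP[r rR ->]; case: (orbit_cycleP (RX r rR)).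
- (* The closed walk of r visits r twice, so no other cycle may pass through r. *)
  rewrite -map_comp map_inj_in_uniq // => r r' rR r'R /= same_arcs.
  apply/eqP; apply: contraT => rr'.
  have rr : (r, next (orbit_cycle r) r) \in cycle_arcs (orbit_cycle r).
    by rewrite inE /= mem_head eqxx.
  have r_twice : 1 < count_mem r (walk r).
    have := iter_round_mem_steps (n := order round r) (i := (order round r).-1) (RX r rR).
    rewrite prednK ?order_gt0 // (iter_order round_inj) => /(_ (leqnn _)).
    by rewrite /walk /= eqxx ltnS -has_count has_pred1.
  have r_in_r' : 0 < count_mem r (walk r').
    by apply: in_walk => //; move: rr; rewrite same_arcs inE => /andP[].
  have := leq_add_sum_seq (fun x => count_mem r (walk x)) uniqR rR r'R rr'.
  by move/(leq_trans (leq_add r_twice r_in_r'))/leq_trans/(_ (congestion r)).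
- move=> v; rewrite count_map; apply: leq_trans (congestion v).
  by apply: count_le_sum => r rR; apply: in_walk.
Qed.

Lemma round_walks_of_segments (a b : nat) (Z : seq V) : 0 < b -> a <= size Z ->
  uniq (flatten [seq traject round z (b + b) | z <- Z]) ->
  {subset flatten [seq traject round z (b + b) | z <- Z] <= X} ->
  exists (P : 'I_a -> seq V) (A B : 'I_a -> {set V}),
    [/\ forall i, is_walk E (P i) /\ ({subset A i <= P i} /\ {subset B i <= P i}),
        congestion_le 2 [seq P i | i : 'I_a],
        (forall i, #|A i| = b /\ #|B i| = b) /\
        (forall i j, [disjoint A i & B j] /\
                     (i != j -> [disjoint A i & A j] /\ [disjoint B i & B j])),
        forall i, before_on (P i) (A i) (B i)
      & \bigcup_(i < a) (A i :|: B i) \subset X].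
Proof.
move=> b_gt0 aZ /(uniq_flatten_map_take a) uZ ZX.
have {}ZX : {subset flatten [seq traject round z (b + b) | z <- take a Z] <= X}.
  by move=> y /flatten_map_take_subset /ZX.
pose seg z := [set y in traject round z (b + b)].
pose A z := [set y in traject round z b].
pose B z := [set y in traject round (iter b round z) b].
have segE z : A z :|: B z = seg z by apply: traject_halvesU.
have seg_sub z : z \in take a Z -> seg z \subset X.
  move=> zZ; apply/subsetP => y; rewrite inE => yz; apply: ZX.
  by apply/flattenP; exists (traject round z (b + b)); first exact: map_f.
have seg_head z : z \in traject round z (b + b) by rewrite -(prednK b_gt0) addSn /= mem_head.
have zX z : z \in take a Z -> z \in X.
  by move=> zZ; apply: (subsetP (seg_sub z zZ)); rewrite inE.
pose t : a.-tuple V := Tuple (introT eqP (size_takel aZ)).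
have zZ i : tnth t i \in take a Z := mem_tnth i t.
have z_inj : injective (tnth t).
  by apply/tuple_uniqP; apply: (uniq_of_uniq_flatten uZ) => z _; apply: seg_head.
have sub_set (s : seq V) : [set y in s] \subset s by apply/subsetP => y; rewrite inE.
have seg_disj i j : i != j -> [disjoint seg (tnth t i) & seg (tnth t j)].
  move=> ij; apply: disjointW (sub_set _) (sub_set _) _.
  by apply: (uniq_flatten_map_disjoint uZ (zZ i) (zZ j)); rewrite (inj_eq z_inj).
have halves i := traject_halves (uniq_flatten_map_mem uZ (zZ i)).
have before i := round_walk_halves b (zX _ (zZ i)).
exists (fun i => round_walk (b + b) (tnth t i)).
exists (fun i => A (tnth t i)), (fun i => B (tnth t i)).
split=> //.
- by move=> i; split; [apply: path_round_steps; apply: zX | apply: before_on_subset].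
- move=> v; rewrite /image_mem (map_comp (round_walk (b + b)) (tnth t)) map_tnth_enum big_map.
  by apply: round_walks_congestion => // z _; rewrite addn_gt0 b_gt0.
- split=> [i|i j]; first by case: (halves i).
  have [<-|ij] := eqVneq i j; first by case: (halves i).
  have := seg_disj i j ij; rewrite -!segE => disj_ij.
  split; first exact: disjointW (subsetUl _ _) (subsetUr _ _) disj_ij.
  by split; apply: disjointW disj_ij; rewrite ?subsetUl ?subsetUr.
- by apply/bigcupsP => i _; rewrite segE seg_sub.
Qed.

End Rounds.
End Digraph.

Theorem lemma15 (V : finType) (E : rel V) (a b k : nat) (D : {set V}) :
  1 <= a -> 1 <= b -> 1 <= k ->
  well_linked E D -> #|D| = 4 * (a + k) * b ->
  ~ (exists F : seq (seq V), half_integral_cycle_packing E k F) ->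
  exists (P : 'I_a -> seq V) (A B : 'I_a -> {set V}),
    [/\ forall i, is_walk E (P i) /\
                   ({subset A i <= P i} /\ {subset B i <= P i}),
        congestion_le 2 [seq P i | i : 'I_a],
        (forall i, #|A i| = b /\ #|B i| = b) /\
        (forall i j, [disjoint A i & B j] /\
                     (i != j -> [disjoint A i & A j] /\ [disjoint B i & B j])),
        forall i, before_on (P i) (A i) (B i)
      & well_linked E (\bigcup_(i < a) (A i :|: B i))].
Proof.
move=> a_gt0 b_gt0 k_gt0 wlD cardD nopack.
have /split_set[X [Y [XD YD disjXY cardX cardY]]] :
  #|D| = 2 * (a + k) * b + 2 * (a + k) * b by rewrite cardD; lia.
have [L1 link1] := well_linked_linkage wlD XD YD (etrans cardX (esym cardY)).
have [L2 link2] := well_linked_linkage wlD YD XD (etrans cardY (esym cardX)).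
have bb_gt0 : 0 < b + b by rewrite addn_gt0 b_gt0.
have [R [Z [uR uZ RX ZX cover]]] :=
  orbit_segment_decomposition (round_inj link1 link2) bb_gt0 (round_in link1 link2).
have [kR|Rk] := leqP k (size R).
  case: nopack; exists (take k [seq orbit_cycle X L1 L2 r | r <- R]).
  apply: half_integral_cycle_packing_take kR.
  exact: (orbit_cycle_packing link1 link2 disjXY uR RX).
have aZ : a <= size Z by move: cover; rewrite cardX; nia.
have [P [A [B [walkP congP cardAB befP ABX]]]] :=
  round_walks_of_segments link1 link2 disjXY b_gt0 aZ uZ ZX.
exists P, A, B; split=> //.
exact: well_linked_subset (subset_trans ABX XD) wlD.
Qed.
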